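(* The dual-rail Bell state $Q=\frac{1}{\sqrt2}\big(a^\dagger_1a^\dagger_3+a^\dagger_2a^\dagger_4\big)$ (i.e. $(|1,0,1,0\rangle+|0,1,0,1\rangle)/\sqrt2$) cannot be generated by heralded linear optics from any multi-mode Fock input state containing three photons. In particular, for $N=5$, input $|1,1,1,0,0\rangle$ and heralding pattern $(1)$ on mode $5$, there is no complex $5\times5$ matrix $A$ and no $\gamma\in\mathbb{C}$ with $\gamma G=Q$.
   Context: Heralded linear-optical state generation model. States with a fixed photon number are homogeneous polynomials in commuting variables $a^\dagger_1,\dots,a^\dagger_N$ applied to the vacuum. Given $N$ modes, an arbitrary complex $N\times N$ matrix $A$ (not required to be unitary), and a Fock input $\prod_{i=1}^N\frac{1}{\sqrt{n_i!}}(a^\dagger_{i,\mathrm{in}})^{n_i}|0\rangle$, the output is $F|0\rangle$ with $F=\prod_{i=1}^N\frac{1}{\sqrt{n_i!}}\big(\sum_{j=1}^N A_{i,j}a^\dagger_j\big)^{n_i}$. Heralding the last $M$ modes on the pattern $(m_1,\dots,m_M)$ (entries $\ge0$), $m=\sum_jm_j$, gives $G=\frac{1}{\prod_jm_j!}\,\frac{\partial^{m}F}{\partial(a^\dagger_{N-M+1})^{m_1}\cdots\partial(a^\dagger_N)^{m_M}}\Big|_{a^\dagger_{N-M+1}=\cdots=a^\dagger_N=0}$, a polynomial in $a^\dagger_1,\dots,a^\dagger_{N-M}$. A target $Q$ on the first $N_T\le N-M$ modes (other unheralded modes in vacuum) can be generated from a given input and heralding pattern if there exist a complex $N\times N$ matrix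 $A$ and $\gamma\in\mathbb{C}$ with $\gamma G=Q$; it can be generated from an $n$-photon Fock input if this holds for some number of modes, some Fock input with $n$ photons and some heralding pattern (necessarily with $n-\deg Q$ photons). *)

From HB Require Import structures.
From mathcomp Require Import all_boot all_order all_algebra all_field.
From mathcomp Require Import complex.
From mathcomp.multinomials Require Import mpoly.
From mathcomp Require Import Rstruct.
Set Implicit Arguments. Unset Strict Implicit. Unset Printing Implicit Defensive.
Import GRing.Theory Num.Theory.
Local Open Scope ring_scope.

Definition C : numClosedFieldType := complex Rdefinitions.R.

(* Modes are indexed by 'I_(K + M): the first K modes are unheralded,
   the last M modes (rshift K k, k : 'I_M) are heralded.
   Creation operators a^dagger_j are the commuting variables 'X_j. *)

Definition outF (N : nat) (A : 'M[C]_N) (n : 'I_N -> nat) : {mpoly C[N]} :=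
  \prod_(i < N) ((sqrtC ((n i)`!)%:R)^-1 *:
                 (\sum_(j < N) A i j *: 'X_j) ^+ (n i)).

Definition herald_multinom (K M : nat) (m : 'I_M -> nat) : 'X_{1..K + M} :=
  [multinom (match split j with inl _ => 0%N | inr k => m k end) | j < K + M].

Definition herald_subst (K M : nat) : (K + M).-tuple {mpoly C[K + M]} :=
  [tuple (match split j with inl _ => 'X_j | inr _ => 0 end) | j < K + M].

Definition heraldG (K M : nat) (A : 'M[C]_(K + M)) (n : 'I_(K + M) -> nat)
    (m : 'I_M -> nat) : {mpoly C[K + M]} :=
  ((\prod_(k < M) ((m k)`!)%:R : C)^-1) *:
    ((outF A n)^`M[herald_multinom K m] \mPo herald_subst K M).

(* variable a^dagger_i given by a nat index (0 if out of range; only used for i < 4 <= K) *)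
Definition Xn (N : nat) (i : nat) : {mpoly C[N]} :=
  \sum_(j < N | (j : nat) == i) 'X_j.

(* Dual-rail Bell state (a1 a3 + a2 a4)/sqrt 2 on modes 1..4 (indices 0..3). *)
Definition bellQ (N : nat) : {mpoly C[N]} :=
  (sqrtC (2 : C))^-1 *: (Xn N 0 * Xn N 2 + Xn N 1 * Xn N 3).

(** After differentiating and setting the heralded modes to zero, [G] is still a
    polynomial in the linear forms [l_i = \sum_j A i j X_j] of the occupied input
    modes [i], and a three-photon input occupies at most three modes.  Three linear
    forms restricted to the four target modes have a common nonzero zero [v], so
    [G] is invariant under translation by [v] inside the target modes.  The Bell
    form [x_0 x_2 + x_1 x_3] has no nonzero translation symmetry, hence
    [gamma G <> Q]. *)
From HB Require Import structures.
From mathcomp Require Import all_boot all_order all_algebra all_field.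
From mathcomp Require Import complex.
From mathcomp.multinomials Require Import mpoly.
From mathcomp Require Import Rstruct.
From mathcomp Require Import ring.
Import GRing.Theory Num.Theory.
Local Open Scope ring_scope.
Set Implicit Arguments. Unset Strict Implicit.

Section PolynomialExpressions.
Variables (R : comNzRingType) (N : nat) (P : pred 'I_N) (L : 'I_N -> {mpoly R[N]}).

Inductive polyexpr : {mpoly R[N]} -> Prop :=
| polyexprC c : polyexpr c%:MP
| polyexprL i : P i -> polyexpr (L i)
| polyexprD p q : polyexpr p -> polyexpr q -> polyexpr (p + q)
| polyexprM p q : polyexpr p -> polyexpr q -> polyexpr (p * q).

Lemma polyexprZ c p : polyexpr p -> polyexpr (c *: p).
Proof. by move=> ep; rewrite -mul_mpolyC; apply: polyexprM => //; apply: polyexprC. Qed.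

Lemma polyexprX p k : polyexpr p -> polyexpr (p ^+ k).
Proof.
move=> ep; elim: k => [|k IHk]; first by rewrite expr0 -mpolyC1; apply: polyexprC.
by rewrite exprS; apply: polyexprM.
Qed.

Lemma polyexpr_meval_eq x y :
  (forall i, P i -> (L i).@[x] = (L i).@[y]) ->
  forall p, polyexpr p -> p.@[x] = p.@[y].
Proof.
move=> eqL p; elim=> [c|i Pi|p1 p2 _ eq1 _ eq2|p1 p2 _ eq1 _ eq2].
- by rewrite !mevalC.
- exact: eqL.
- by rewrite !mevalD eq1 eq2.
- by rewrite !mevalM eq1 eq2.
Qed.

Hypothesis mderivL_const : forall j i, P i -> exists c, (L i)^`M(j) = c%:MP.

Lemma polyexpr_mderiv j p : polyexpr p -> polyexpr p^`M(j).
Proof.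
elim=> [c|i Pi|p1 p2 _ e1 _ e2|p1 p2 ep1 ed1 ep2 ed2].
- by rewrite mderivC -mpolyC0; apply: polyexprC.
- by have [c ->] := mderivL_const j Pi; apply: polyexprC.
- by rewrite mderivD; apply: polyexprD.
- by rewrite mderivM; apply: polyexprD; apply: polyexprM.
Qed.

Lemma polyexpr_mderivm mm p : polyexpr p -> polyexpr p^`M[mm].
Proof.
move=> ep; rewrite mderivm_foldr; elim: (flatten _) => //= j s IHs.
exact: polyexpr_mderiv.
Qed.

End PolynomialExpressions.

Definition linear_form (R : nzRingType) N (a : 'I_N -> R) : {mpoly R[N]} :=
  \sum_(j < N) a j *: 'X_j.

Lemma mderiv_linear_form (R : nzRingType) N (a : 'I_N -> R) j :
  (linear_form a)^`M(j) = (a j)%:MP.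
Proof.
rewrite /linear_form raddf_sum (bigD1 j) //= big1 ?addr0 => [|k /negbTE neq_kj].
  rewrite mderivZ mderivX mnm1E eqxx.
  have -> : (U_(j) - U_(j))%MM = 0%MM by apply/mnmP => k; rewrite mnmBE subnn mnm0E.
  by rewrite mpolyX0 scale1r -mul_mpolyC mulr1.
by rewrite mderivZ mderivX mnm1E neq_kj scale0r scaler0.
Qed.

Lemma card_support_le_sum (I : finType) (n : I -> nat) :
  (#|[set i | n i != 0]| <= \sum_i n i)%N.
Proof.
rewrite -sum1_card big_mkcond /=; apply: leq_sum => i _.
by rewrite inE; case: (n i).
Qed.

Lemma exists_common_kernel_vector (F : fieldType) (I : finType) (S : {set I})
    n (a : I -> 'I_n -> F) : (#|S| < n)%N ->
  exists2 v : 'rV[F]_n, v != 0 & forall i, i \in S -> \sum_j a i j * v 0 j = 0.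
Proof.
move=> ltSn.
pose B : 'M[F]_(n, #|S|) := \matrix_(j, k) a (enum_val k) j.
have /rowV0Pn[v /sub_kermxP vB nz_v] : kermx B != 0.
  by rewrite -mxrank_eq0 mxrank_ker subn_eq0 -ltnNge (leq_ltn_trans (rank_leq_col B)).
exists v => // i Si.
have := congr1 (fun u : 'rV_#|S| => u 0 (enum_rank_in Si i)) vB.
rewrite !mxE => vBi; rewrite -[RHS]vBi; apply: eq_bigr => j _.
by rewrite mxE enum_rankK_in // mulrC.
Qed.

Definition bell_form (R : nzRingType) (w : 'rV[R]_4) : R :=
  w 0 (inord 0) * w 0 (inord 2) + w 0 (inord 1) * w 0 (inord 3).

Lemma bell_form_translation_invariant_eq0 (R : comNzRingType) (v : 'rV[R]_4) :
  (forall w, bell_form (w + v) = bell_form w) -> v = 0.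
Proof.
move=> inv_v.
have shift a b c d : (a + v 0 (inord 0)) * (c + v 0 (inord 2))
    + (b + v 0 (inord 1)) * (d + v 0 (inord 3)) = a * c + b * d.
  by have := inv_v (\row_j [:: a; b; c; d]`_j); rewrite /bell_form !mxE !inordK.
have coord a b c d x : x = (a + v 0 (inord 0)) * (c + v 0 (inord 2))
    + (b + v 0 (inord 1)) * (d + v 0 (inord 3))
    - ((0 + v 0 (inord 0)) * (0 + v 0 (inord 2))
       + (0 + v 0 (inord 1)) * (0 + v 0 (inord 3))) ->
  x = a * c + b * d - (0 * 0 + 0 * 0).
  by move=> ->; rewrite !shift.
apply/rowP => j; rewrite [RHS]mxE -[j]inord_val.
case: j => [[|[|[|[|k]]]] //= _].
- by rewrite (coord 0 0 1 0 (v 0 _)); ring.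
- by rewrite (coord 0 0 0 1 (v 0 _)); ring.
- by rewrite (coord 1 0 0 0 (v 0 _)); ring.
- by rewrite (coord 0 1 0 0 (v 0 _)); ring.
Qed.

Definition pad4 (R : nmodType) N (w : 'rV[R]_4) (j : 'I_N) : R :=
  if (j < 4)%N then w 0 (inord j) else 0.

Section PaddedEvaluation.
Variables (N : nat) (le4N : (4 <= N)%N).

Lemma meval_linear_form_pad4 (R : comNzRingType) (a : 'I_N -> R) w :
  (linear_form a).@[pad4 w] = \sum_(j < 4) a (widen_ord le4N j) * w 0 j.
Proof.
rewrite /linear_form raddf_sum /=.
under eq_bigr do rewrite mevalZ mevalXU.
rewrite (bigID (fun j : 'I_N => (j < 4)%N)) /= [X in _ + X]big1 ?addr0; last first.
  by move=> j /negbTE ge4j; rewrite /pad4 ge4j mulr0.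
rewrite (big_ord_narrow le4N); apply: eq_bigr => j _.
by rewrite /pad4 /= ltn_ord inord_val.
Qed.

Lemma meval_Xn_pad4 (a : nat) w : (a < 4)%N -> (Xn N a).@[pad4 w] = w 0 (inord a).
Proof.
move=> lta4; have ltaN : (a < N)%N := leq_trans lta4 le4N.
rewrite /Xn raddf_sum /= (big_pred1 (Ordinal ltaN)) => [|j]; last by rewrite /= -val_eqE.
by rewrite (mevalXU (pad4 w)) /pad4 /= lta4.
Qed.

Lemma meval_bellQ_pad4 w : (bellQ N).@[pad4 w] = (sqrtC 2)^-1 * bell_form w.
Proof. by rewrite /bellQ mevalZ mevalD !mevalM !meval_Xn_pad4. Qed.

End PaddedEvaluation.

Lemma polyexpr_outF N (A : 'M[C]_N) n :
  polyexpr (fun i => n i != 0) (fun i => linear_form (A i)) (outF A n).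
Proof.
apply: big_ind => [|p q|i _]; first by rewrite -mpolyC1; apply: polyexprC.
  exact: polyexprM.
apply: polyexprZ; have [-> | nz_ni] := eqVneq (n i) 0%N.
  by rewrite expr0 -mpolyC1; apply: polyexprC.
exact/polyexprX/polyexprL.
Qed.

Lemma meval_heraldG_pad4 K M (A : 'M[C]_(K + M)) n m w : (4 <= K)%N ->
  (heraldG A n m).@[pad4 w] =
  (\prod_(k < M) ((m k)`!)%:R : C)^-1 *
    ((outF A n)^`M[herald_multinom K m]).@[pad4 w].
Proof.
move=> le4K; rewrite /heraldG mevalZ comp_mpoly_meval; congr (_ * _).
apply: meval_eq => i; rewrite /herald_subst tnth_mktuple.
case: splitP => [j _|k eq_i]; first by rewrite mevalXU.
by rewrite meval0 /pad4 eq_i ltnNge (leq_trans le4K (leq_addr _ _)).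
Qed.

Theorem mainTheorem3 (K M : nat) (hK : (4 <= K)%N)
    (n : 'I_(K + M) -> nat) (hn : (\sum_(i < K + M) n i)%N = 3%N)
    (m : 'I_M -> nat) (A : 'M[C]_(K + M)) (gamma : C) :
  gamma *: heraldG A n m <> bellQ (K + M).
Proof.
move=> eqQ; have le4N : (4 <= K + M)%N := leq_trans hK (leq_addr M K).
have [v nz_v v_ker] : exists2 v : 'rV[C]_4, v != 0 & forall i, i \in [set i | n i != 0] ->
    \sum_j A i (widen_ord le4N j) * v 0 j = 0.
  by apply: exists_common_kernel_vector; rewrite ltnS -hn card_support_le_sum.
have G_inv w : (heraldG A n m).@[pad4 (w + v)] = (heraldG A n m).@[pad4 w].
  rewrite !meval_heraldG_pad4 //; congr (_ * _).
  apply: polyexpr_meval_eq (polyexpr_mderivm _ _ (polyexpr_outF A n)) => [i ni|j i _].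
    rewrite !meval_linear_form_pad4.
    under eq_bigr do rewrite mxE mulrDr.
    by rewrite big_split /= v_ker ?inE // addr0.
  by exists (A i j); exact: mderiv_linear_form.
have nz_sqrt2 : (sqrtC (2 : C))^-1 != 0 by rewrite invr_eq0 sqrtC_eq0 pnatr_eq0.
apply/(negP nz_v)/eqP/bell_form_translation_invariant_eq0 => w.
apply: (mulfI nz_sqrt2).
rewrite -!(meval_bellQ_pad4 le4N) -eqQ !(mevalZ _ gamma); congr (_ * _).
exact: G_inv.
Qed.
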